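(* Let $\mathcal V$ be a finite vocabulary and $C\ge 2$ an integer. For each $i\in\{1,\dots,C\}$ let $w_i:\mathcal V\to\mathbb R$ be arbitrary maps such that there exist $\tau\in\mathcal V$ and $i\in\{2,\dots,C\}$ with $w_i(\tau)\neq 0$, and let $b\in\mathbb R$. Then for every number of layers $L\ge 1$ and heads $H\ge1$, there is no parametrization of an $L$-layer transformer $F$ (encoder-only or decoder-only) such that $F(\mathbf t)=b+\sum_{i=1}^{|\mathbf t|} w_i(t_i)$ for every sequence $\mathbf t$ over $\mathcal V$ with $1\le|\mathbf t|\le C$.
   Context: Let $\mathcal V$ be a finite vocabulary and $C\ge 2$ the context length; inputs are sequences $\mathbf t=[t_1,\dots,t_{|\mathbf t|}]$ with $t_i\in\mathcal V$ and $1\le|\mathbf t|\le C$. An $L$-layer transformer (without positional embeddings) with embedding dimension $d$, head dimension $d_h$ and $H\ge 1$ heads per layer is specified by: an embedding map $e:\mathcal V\to\mathbb R^d$; for each layer $l\in\{1,\dots,L\}$ and head $h\in\{1,\dots,H\}$, matrices $W_Q^{(l,h)},W_K^{(l,h)},W_V^{(l,h)}\in\mathbb R^{d\times d_h}$, vectors $b_Q^{(l,h)},b_K^{(l,h)},b_V^{(l,h)}\in\mathbb R^{d_h}$ and a linear map $P_{l,h}:\mathbb R^{d_h}\to\mathbb R^d$; for each layer an arbitrary function $\mathrm{ffn}_l:\mathbb R^d\to\mathbb R^d$; and an arbitrary classification head $\mathrm{cls}:\mathbb R^d\to\mathbb R^2$. A parametrization is any choice of all these objects. On input $\mathbf t$,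 set $h_i^{(0)}=e(t_i)$. In layer $l$, for each head $h$ compute $q_i=(W_Q^{(l,h)})^\top h_i^{(l-1)}+b_Q^{(l,h)}$, $k_i=(W_K^{(l,h)})^\top h_i^{(l-1)}+b_K^{(l,h)}$, $v_i=(W_V^{(l,h)})^\top h_i^{(l-1)}+b_V^{(l,h)}$; attention weights $a_{ij}=\exp(q_i^\top k_j/\sqrt{d_h})/\sum_{j'\in J_i}\exp(q_i^\top k_{j'}/\sqrt{d_h})$ for $j\in J_i$ and $a_{ij}=0$ for $j\notin J_i$, where $J_i=\{1,\dots,|\mathbf t|\}$ for an encoder-only model and $J_i=\{1,\dots,i\}$ for a decoder-only model (causal mask); head output $s_i^{(h)}=\sum_{j} a_{ij}v_j$. Then $h_i^{(l)}=\mathrm{ffn}_l\big(h_i^{(l-1)}+\sum_{h=1}^H P_{l,h}(s_i^{(h)})\big)$. The output (log odds) is $F(\mathbf t)=\Delta(\mathrm{cls}(h_r^{(L)}))$, where $\Delta(\ell)=\ell_1-\ell_0$ for $\ell=(\ell_0,\ell_1)\in\mathbb R^2$, and $r=1$ for encoder-only models, $r=|\mathbf t|$ for decoder-only models. *)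

From HB Require Import structures.
From mathcomp Require Import all_boot all_order all_algebra.
From mathcomp Require Import all_classical all_reals all_analysis.
Set Implicit Arguments. Unset Strict Implicit. Unset Printing Implicit Defensive.
Import Order.TTheory GRing.Theory Num.Theory.
Local Open Scope ring_scope.

(* Vectors of R^d are row vectors 'rV[R]_d.  A map x |-> W^T x + b is written
   x *m W + b with W : 'M_(d, dh). Positions are 0-indexed. *)

Record head (R : realType) (d dh : nat) := Head {
  WQ : 'M[R]_(d, dh); WK : 'M[R]_(d, dh); WV : 'M[R]_(d, dh);
  bQ : 'rV[R]_dh; bK : 'rV[R]_dh; bV : 'rV[R]_dh;
  Pout : 'M[R]_(dh, d) }.

Record layer (R : realType) (d dh H : nat) := Layer {
  lheads : 'I_H -> head R d dh;
  lffn : 'rV[R]_d -> 'rV[R]_d }.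

Record transformer (R : realType) (V : Type) (d dh H : nat) := Transformer {
  emb : V -> 'rV[R]_d;
  layers : seq (layer R d dh H);
  cls : 'rV[R]_d -> R * R }.

(* dec = true: decoder-only (causal mask J_i = {j <= i}); false: encoder-only. *)
Definition attn_mask (dec : bool) (i j : nat) : bool :=
  if dec then (j <= i)%N else true.

Definition head_out (R : realType) (d dh : nat) (dec : bool)
  (hd : head R d dh) (hs : seq 'rV[R]_d) (i : nat) : 'rV[R]_dh :=
  let n := size hs in
  let h j := nth 0 hs j in
  let q := h i *m WQ hd + bQ hd in
  let k j := h j *m WK hd + bK hd in
  let v j := h j *m WV hd + bV hd in
  let sc j := expR ((q *m (k j)^T) 0 0 / Num.sqrt (dh%:R)) in
  let Z := \sum_(j < n | attn_mask dec i j) sc j in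
  \sum_(j < n | attn_mask dec i j) (sc j / Z) *: v j.

Definition layer_apply (R : realType) (d dh H : nat) (dec : bool)
  (ly : layer R d dh H) (hs : seq 'rV[R]_d) : seq 'rV[R]_d :=
  [seq lffn ly (nth 0 hs i +
       \sum_(hh < H) (head_out dec (lheads ly hh) hs i *m Pout (lheads ly hh)))
  | i <- iota 0 (size hs)].

Definition run (R : realType) (V : Type) (d dh H : nat) (dec : bool)
  (T : transformer R V d dh H) (t : seq V) : seq 'rV[R]_d :=
  foldl (fun hs ly => layer_apply dec ly hs) (map (emb T) t) (layers T).

Definition tf_output (R : realType) (V : Type) (d dh H : nat) (dec : bool)
  (T : transformer R V d dh H) (t : seq V) : R :=
  let r := if dec then (size t).-1 else 0%N in
  let l := cls T (nth 0 (run dec T t) r) in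
  l.2 - l.1.

From Pilot Require Import Defs.
From HB Require Import structures.
From mathcomp Require Import all_boot all_order all_algebra.
From mathcomp Require Import all_classical all_reals all_analysis.
Set Implicit Arguments. Unset Strict Implicit. Unset Printing Implicit Defensive.
Import Order.TTheory GRing.Theory Num.Theory.
Local Open Scope ring_scope.

(* On a constant input [tau; ...; tau] every attention head averages identical
   value vectors, so each layer acts position-wise and identically; hence the
   output of any transformer on a constant sequence does not depend on its
   length.  The target, however, changes by w_i(tau) when the length grows
   from i-1 to i, and some such w_i(tau) with 2 <= i <= C is nonzero. *)

Lemma head_out_nseq (R : realType) (d dh : nat) (dec : bool)
  (hd : Defs.head R d dh) (k i : nat) (v : 'rV[R]_d) :
  (i < k)%N -> head_out dec hd (nseq k v) i = v *m WV hd + bV hd.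
Proof.
move=> ik; rewrite /head_out /=.
have nth_v (j : 'I_(size (nseq k v))) : nth 0 (nseq k v) j = v.
  by rewrite nth_nseq -[X in (_ < X)%N](size_nseq k v) ltn_ord.
under eq_bigr => j _ do rewrite nth_v.
rewrite -scaler_suml -mulr_suml.
set Z := \sum_(_ < _ | _) _.
have ik' : (i < size (nseq k v))%N by rewrite size_nseq.
have Z_gt0 : 0 < Z.
  rewrite /Z (bigD1 (Ordinal ik')) /=; last by rewrite /attn_mask; case: (dec).
  apply: ltr_pwDl; first exact: expR_gt0.
  by apply: sumr_ge0 => j _; apply/ltW/expR_gt0.
rewrite [X in Z / X](_ : _ = Z); last by apply: eq_bigr => j _; rewrite nth_v.
by rewrite divff ?scale1r // gt_eqF.
Qed.

Definition layer_token (R : realType) (d dh H : nat) (ly : layer R d dh H)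
  (v : 'rV[R]_d) : 'rV[R]_d :=
  lffn ly (v + \sum_(hh < H)
    ((v *m WV (lheads ly hh) + bV (lheads ly hh)) *m Pout (lheads ly hh))).

Definition run_token (R : realType) (V : Type) (d dh H : nat)
  (T : transformer R V d dh H) (x : V) : 'rV[R]_d :=
  foldl (fun v ly => layer_token ly v) (emb T x) (layers T).

Lemma layer_apply_nseq (R : realType) (d dh H : nat) (dec : bool)
  (ly : layer R d dh H) (k : nat) (v : 'rV[R]_d) :
  layer_apply dec ly (nseq k v) = nseq k (layer_token ly v).
Proof.
rewrite /layer_apply size_nseq.
transitivity [seq layer_token ly v | _ <- iota 0 k].
  apply/eq_in_map => i; rewrite mem_iota add0n => /andP[_ ik].
  rewrite nth_nseq ik /layer_token; congr (lffn _ (_ + _)).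
  by apply: eq_bigr => hh _; rewrite head_out_nseq.
by rewrite -[k in RHS](size_iota 0 k); elim: (iota 0 k) => //= _ s ->.
Qed.

Lemma run_nseq (R : realType) (V : Type) (d dh H : nat) (dec : bool)
  (T : transformer R V d dh H) (k : nat) (x : V) :
  run dec T (nseq k x) = nseq k (run_token T x).
Proof.
rewrite /run /run_token map_nseq.
by elim: (layers T) (emb T x) => //= ly s IH v; rewrite layer_apply_nseq IH.
Qed.

Lemma tf_output_nseq (R : realType) (V : Type) (d dh H : nat) (dec : bool)
  (T : transformer R V d dh H) (k : nat) (x : V) :
  (0 < k)%N -> tf_output dec T (nseq k x) = tf_output dec T [:: x].
Proof.
move=> k_gt0; rewrite -[[:: x]]/(nseq 1 x) /tf_output !run_nseq !size_nseq.
have r_lt_k : ((if dec then k.-1 else 0) < k)%N by case: (dec); case: k k_gt0.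
by rewrite !nth_nseq r_lt_k; case: (dec).
Qed.

Lemma sum_tnth_nseq (R : realType) (V : Type) (w : nat -> V -> R)
  (k : nat) (x : V) :
  \sum_(i < size (nseq k x)) w i.+1 (tnth (in_tuple (nseq k x)) i) =
  \sum_(i < k) w i.+1 x.
Proof.
have tnth_x (i : 'I_(size (nseq k x))) : tnth (in_tuple (nseq k x)) i = x.
  by rewrite (tnth_nth x) /= nth_nseq -[X in (_ < X)%N](size_nseq k x) ltn_ord.
under eq_bigr => i _ do rewrite tnth_x.
by rewrite size_nseq.
Qed.

Theorem corollary4p3 (R : realType) (V : finType) (C : nat)
  (w : nat -> V -> R) (b : R) :
  (2 <= C)%N ->
  (exists (tau : V) (i : nat), (2 <= i <= C)%N /\ w i tau != 0) ->
  forall (L H : nat), (1 <= L)%N -> (1 <= H)%N -> forall dec : bool,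
  ~ exists (d dh : nat) (T : transformer R V d dh H),
      size (layers T) = L /\
      forall t : seq V, (1 <= size t <= C)%N ->
        tf_output dec T t = b + \sum_(i < size t) w i.+1 (tnth (in_tuple t) i).
Proof.
move=> _ [tau [[|i] [/andP[i_ge2 i_leC] w_neq0]]] // L H _ _ dec.
move=> [d [dh [T [_ hT]]]].
have i_gt0 : (0 < i)%N by case: i i_ge2 {i_leC w_neq0}.
have hT_nseq k : (0 < k <= C)%N ->
    tf_output dec T [:: tau] = b + \sum_(j < k) w j.+1 tau.
  move=> /andP[k_gt0 k_leC].
  by rewrite -(tf_output_nseq _ _ _ k_gt0) hT ?sum_tnth_nseq // size_nseq k_gt0.
have := hT_nseq i.+1 i_leC; rewrite big_ord_recr /= (hT_nseq i); last first.
  by rewrite i_gt0 ltnW.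
rewrite addrA -{1}[b + _]addr0 => /addrI/esym/eqP.
by rewrite (negPf w_neq0).
Qed.
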